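(* For each $n\in\mathbb{N}$ let $A_n\subseteq\mathcal{R}$ be L-measurable, with $\lim_{n\to\infty}M(A_n)=0$, and let $X\subseteq\mathcal{R}$ be outer measurable. Then $X\cap\bigcup_{n=1}^\infty A_n$ is outer measurable, the limit $\lim_{N\to\infty}M_u\big(X\cap\bigcup_{n=1}^N A_n\big)$ exists in $\mathcal{R}$, and $$\lim_{N\to\infty}M_u\Big(X\cap\bigcup_{n=1}^N A_n\Big)=M_u\Big(X\cap\bigcup_{n=1}^\infty A_n\Big).$$
   Context: $\mathcal{R}$ denotes the Levi-Civita field: functions $x:\mathbb{Q}\to\mathbb{R}$ with left-finite support, with componentwise addition and formal power series multiplication, ordered by $x>0$ iff $x\ne0$ and $x[\min\operatorname{supp}x]>0$; it is a non-Archimedean ordered field extension of $\mathbb{R}$, Cauchy complete in the order topology, in which all limits and series are taken (a series $\sum a_n$ converges iff $a_n\to0$). An interval is a set $[a,b],[a,b),(a,b]$ or $(a,b)$ with $a<b$ in $\mathcal{R}$, of length $l=b-a$. A cover of $A\subseteq\mathcal{R}$ is a sequence of intervals $(S_n)_{n\ge1}$ with $A\subseteq\bigcup_n S_n$ and $\sum_n l(S_n)$ convergent in $\mathcal{R}$. $A$ is called outer measurable if the infimum $\inf\{\sum_n l(S_n): (S_n)\text{ a cover of }A\}$ exists in $\mathcal{R}$; this infimum is then called the outer measure $M_u(A)$. An outer measurable set $A\subseteq\mathcal{R}$ is L-measurable if for every outer measurable $B\subseteq\mathcal{R}$ both $A\cap B$ and $A^c\cap B$ (where $A^c=\mathcal{R}\setminus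 A$) are outer measurable and $M_u(B)=M_u(A\cap B)+M_u(A^c\cap B)$; then its L-measure is $M(A):=M_u(A)$. *)

From Stdlib Require Import Reals ClassicalEpsilon.
From mathcomp Require Import all_boot all_order all_algebra.
From mathcomp Require Import Rstruct.
Import Order.TTheory GRing.Theory Num.Theory.
Set Implicit Arguments. Unset Strict Implicit. Unset Printing Implicit Defensive.
Local Open Scope ring_scope.

Definition left_finite (f : rat -> R) : Prop :=
  forall q : rat, exists s : seq rat, forall r : rat, r < q -> f r != 0 -> r \in s.

(* The Levi-Civita field (as a set of functions Q -> R) *)
Record LC := MkLC { lcf :> rat -> R ; lcP : left_finite lcf }.

Lemma left_finite0 : left_finite (fun _ => 0).
Proof. by move=> q; exists [::] => r _; rewrite eqxx. Qed.

Lemma left_finite_add (x y : LC) : left_finite (fun q => x q + y q).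
Proof.
move=> q; have [s1 H1] := lcP x q; have [s2 H2] := lcP y q.
exists (s1 ++ s2) => r rq; rewrite mem_cat.
case: (eqVneq (x r) 0) => hx.
  by rewrite hx add0r => hy; rewrite (H2 r rq hy) orbT.
by rewrite (H1 r rq hx).
Qed.

Lemma left_finite_opp (x : LC) : left_finite (fun q => - x q).
Proof. by move=> q; have [s H] := lcP x q; exists s => r rq; rewrite oppr_eq0; apply: H. Qed.

Definition lc_zero : LC := MkLC left_finite0.
Definition lc_add (x y : LC) : LC := MkLC (left_finite_add x y).
Definition lc_opp (x : LC) : LC := MkLC (left_finite_opp x).
Definition lc_sub (x y : LC) : LC := lc_add x (lc_opp y).

(* x > 0 iff x <> 0 and x[min supp x] > 0 : i.e. there is a support point q
   with x q > 0 below which x vanishes (q is then min supp x). *)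
Definition lc_pos (x : LC) : Prop :=
  exists q : rat, 0 < x q /\ forall r : rat, r < q -> x r = 0.

Definition lc_lt (x y : LC) : Prop := lc_pos (lc_sub y x).
Definition lc_le (x y : LC) : Prop := lc_lt x y \/ x = y.

Definition lc_lim (u : nat -> LC) (l : LC) : Prop :=
  forall a b : LC, lc_lt a l -> lc_lt l b ->
    exists N : nat, forall n : nat, (N <= n)%N -> lc_lt a (u n) /\ lc_lt (u n) b.

Fixpoint lc_psum (u : nat -> LC) (N : nat) : LC :=
  match N with
  | O => lc_zero
  | S m => lc_add (lc_psum u m) (u m)
  end.

Definition lc_series (u : nat -> LC) (s : LC) : Prop := lc_lim (lc_psum u) s.

(* intervals [a,b], [a,b), (a,b], (a,b) with a < b; the booleans say whether
   the left/right endpoint is included *)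
Record interval := MkInterval { ia : LC ; ib : LC ; icl : bool ; icr : bool }.
Definition valid_interval (I : interval) : Prop := lc_lt (ia I) (ib I).
Definition in_interval (I : interval) (x : LC) : Prop :=
  (if icl I then lc_le (ia I) x else lc_lt (ia I) x) /\
  (if icr I then lc_le x (ib I) else lc_lt x (ib I)).
Definition ilength (I : interval) : LC := lc_sub (ib I) (ia I).

Definition lcset := LC -> Prop.

Definition is_cover (A : lcset) (S : nat -> interval) : Prop :=
  (forall n, valid_interval (S n)) /\
  (forall x, A x -> exists n, in_interval (S n) x) /\
  (exists s, lc_series (fun n => ilength (S n)) s).

Definition cover_sums (A : lcset) : LC -> Prop :=
  fun s => exists S, is_cover A S /\ lc_series (fun n => ilength (S n)) s.

Definition is_inf (P : LC -> Prop) (m : LC) : Prop :=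
  (forall s, P s -> lc_le m s) /\
  (forall m', (forall s, P s -> lc_le m' s) -> lc_le m' m).

Definition outer_measurable (A : lcset) : Prop := exists m, is_inf (cover_sums A) m.

(* outer measure: the infimum (whenever it exists; otherwise an unspecified value) *)
Definition Mu (A : lcset) : LC :=
  epsilon (inhabits lc_zero) (fun m => is_inf (cover_sums A) m).

Definition setI (A B : lcset) : lcset := fun x => A x /\ B x.
Definition setC (A : lcset) : lcset := fun x => ~ A x.

Definition L_measurable (A : lcset) : Prop :=
  outer_measurable A /\
  forall B : lcset, outer_measurable B ->
    outer_measurable (setI A B) /\ outer_measurable (setI (setC A) B) /\
    Mu B = lc_add (Mu (setI A B)) (Mu (setI (setC A) B)).

Definition Mmeas (A : lcset) : LC := Mu A.

From Pilot Require Import Defs.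
From Stdlib Require Import Reals ClassicalEpsilon Classical FunctionalExtensionality ProofIrrelevance.
From Stdlib Require Cantor.
From mathcomp Require Import all_boot all_order all_algebra.
From mathcomp Require Import Rstruct.
From mathcomp Require Import lra.
Import Order.TTheory GRing.Theory Num.Theory.
Set Implicit Arguments. Unset Strict Implicit. Unset Printing Implicit Defensive.
Local Open Scope ring_scope.

(* Split X into the disjoint pieces D_n = X ∩ A_n \ (A_0 ∪ ... ∪ A_(n-1)).  Applying the
   L-measurability of A_0, ..., A_(N-1) successively gives
   M_u(X) = Σ_(n<N) M_u(D_n) + M_u(X \ (A_0 ∪ ... ∪ A_(N-1))), and since a cover of the union
   together with a cover of the rest covers X, Σ_(n<N) M_u(D_n) is the outer measure of
   X ∩ (A_0 ∪ ... ∪ A_(N-1)).  As M_u(D_n) <= M(A_n) -> 0 the series Σ M_u(D_n) converges;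
   its sum L bounds every cover sum of X ∩ ⋃ A_n from below, and covering each D_n within
   d^(q+n) of M_u(D_n) and merging these covers along the Cantor pairing gives cover sums
   exceeding L by an amount with no support below q, so L is the infimum.
   Convergence in the Levi-Civita field is handled coefficientwise: u_n -> l iff for every
   q, u_n eventually agrees with l at all exponents below q. *)

(** * Order of the Levi-Civita field *)

Definition agree_below (q : rat) (x y : LC) : Prop := forall r, r < q -> x r = y r.

Lemma lc_ext (x y : LC) : (forall q, x q = y q) -> x = y.
Proof.
case: x y => [f Hf] [g Hg] /= H.
have E : f = g by apply: functional_extensionality.
by subst g; rewrite (proof_irrelevance _ Hf Hg).
Qed.

Lemma lc_pos_congr (x y : LC) : (forall q, x q = y q) -> lc_pos x -> lc_pos y.
Proof.
move=> H [q [h1 h2]]; exists q; split; first by rewrite -H.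
by move=> r rq; rewrite -H h2.
Qed.

Lemma lc_pos_add (x y : LC) : lc_pos x -> lc_pos y -> lc_pos (lc_add x y).
Proof.
move=> [p [h1 h2]] [q [k1 k2]].
case: (ltgtP p q) => [pq|qp|e].
- exists p; split=> /=; first by rewrite (k2 _ pq) addr0.
  by move=> r rp; rewrite h2 // k2 ?addr0 //; exact: lt_trans rp pq.
- exists q; split=> /=; first by rewrite (h2 _ qp) add0r.
  by move=> r rq; rewrite k2 // h2 ?addr0 //; exact: lt_trans rq qp.
- subst q; exists p; split=> /=; first by rewrite addr_gt0.
  by move=> r rp; rewrite h2 // k2 // addr0.
Qed.

Lemma ex_seq_min (s : seq rat) : s != [::] ->
  exists2 m, m \in s & forall x, x \in s -> m <= x.
Proof.
elim: s => // a s IH _.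
have [->|/IH [m ms hm]] := eqVneq s [::].
  by exists a => [|x]; rewrite ?inE ?eqxx // => /eqP ->.
have [am|ma] := leP a m.
  exists a => [|x]; first by rewrite inE eqxx.
  by rewrite inE => /orP [/eqP ->//|/hm]; exact: le_trans.
exists m => [|x]; first by rewrite inE ms orbT.
by rewrite inE => /orP [/eqP ->|/hm //]; exact: ltW.
Qed.

(* Left-finiteness is what makes a nonzero element have a least support point. *)
Lemma lc_min_support (w : LC) : (exists r, w r != 0) ->
  exists p, w p != 0 /\ agree_below p w lc_zero.
Proof.
move=> [r hr]; have [s hs] := lcP w (r + 1).
set s' := [seq x <- s | w x != 0].
have rs : r \in s' by rewrite mem_filter hr hs // ltrDl.
have [|m ms hm] := @ex_seq_min s'; first by apply: contraTneq rs => ->.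
exists m; split; first by move: ms; rewrite mem_filter => /andP [].
move=> x xm; apply/eqP; apply: contraT => hx.
have xr : x < r + 1.
  by apply: lt_le_trans xm (le_trans (hm _ rs) _); rewrite ltW // ltrDl.
have /hm : x \in s' by rewrite mem_filter hx hs.
by rewrite leNgt xm.
Qed.

Lemma lc_pos_or_opp (w : LC) : (exists r, w r != 0) -> lc_pos w \/ lc_pos (lc_opp w).
Proof.
move=> /lc_min_support [p [h1 h2]].
case: (ltgtP (w p) 0) => [neg|gt|e]; last by rewrite e eqxx in h1.
- right; exists p; split=> /=; first by rewrite oppr_gt0.
  by move=> r rp; rewrite h2 // oppr0.
- by left; exists p.
Qed.

Lemma lc_lt_shift (x y x' y' : LC) : (forall r, y r - x r = y' r - x' r) ->
  lc_lt x y -> lc_lt x' y'.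
Proof. by move=> H; apply: lc_pos_congr => q /=; exact: H. Qed.

Lemma lc_le_shift (x y x' y' : LC) : (forall r, y r - x r = y' r - x' r) ->
  lc_le x y -> lc_le x' y'.
Proof.
move=> H [h|e]; first by left; exact: lc_lt_shift h.
right; subst y; apply: lc_ext => r; have /eqP := H r.
by rewrite subrr eq_sym subr_eq0 => /eqP.
Qed.

Lemma lc_lt_irr (x : LC) : ~ lc_lt x x.
Proof. by move=> [p [/= + _]]; rewrite subrr ltxx. Qed.

Lemma lc_lt_trans (x y z : LC) : lc_lt x y -> lc_lt y z -> lc_lt x z.
Proof. by move=> h1 h2; move: (lc_pos_add h2 h1); apply: lc_pos_congr => q /=; lra. Qed.

Lemma lc_lt_total (x y : LC) : lc_lt x y \/ x = y \/ lc_lt y x.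
Proof.
have [h|h] := classic (exists r, lc_sub y x r != 0).
  case: (lc_pos_or_opp h) => [p|p]; [by left | right; right].
  by move: p; apply: lc_pos_congr => q /=; lra.
right; left; apply: lc_ext => r; apply/eqP; apply: contraT => hr.
by case: h; exists r => /=; rewrite subr_eq0 eq_sym.
Qed.

Lemma lc_lt_le_trans (x y z : LC) : lc_lt x y -> lc_le y z -> lc_lt x z.
Proof. by move=> h [h'|<-] //; exact: lc_lt_trans h h'. Qed.

Lemma lc_le_lt_trans (x y z : LC) : lc_le x y -> lc_lt y z -> lc_lt x z.
Proof. by move=> [h'|->] h //; exact: lc_lt_trans h' h. Qed.

Lemma lc_le_trans (x y z : LC) : lc_le x y -> lc_le y z -> lc_le x z.
Proof. by move=> [h|->] h' //; left; exact: lc_lt_le_trans h h'. Qed.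

Lemma lc_leNgt (x y : LC) : lc_le x y <-> ~ lc_lt y x.
Proof.
split=> [[h|->] h'|h]; first exact: lc_lt_irr (lc_lt_trans h h').
- exact: lc_lt_irr h'.
- by case: (lc_lt_total x y) => [a|[b|//]]; [left | right].
Qed.

Lemma lc_le_anti (x y : LC) : lc_le x y -> lc_le y x -> x = y.
Proof. by move=> [h|//] /lc_leNgt. Qed.

Lemma lc_ltD (a b c d : LC) : lc_lt a b -> lc_lt c d -> lc_lt (lc_add a c) (lc_add b d).
Proof. by move=> h1 h2; move: (lc_pos_add h1 h2); apply: lc_pos_congr => q /=; lra. Qed.

Lemma lc_leD (a b c d : LC) : lc_le a b -> lc_le c d -> lc_le (lc_add a c) (lc_add b d).
Proof.
move=> [h1|<-] h2; last by apply: lc_le_shift h2 => r /=; lra.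
left; case: h2 => [h2|<-]; first exact: lc_ltD.
by apply: lc_lt_shift h1 => r /=; lra.
Qed.

Lemma lc_pos_agree (x : LC) : lc_pos x ->
  exists q, forall y, agree_below q y x -> lc_pos y.
Proof.
move=> [p [h1 h2]]; exists (p + 1) => y H; exists p; split.
  by rewrite H // ltrDl.
by move=> r rp; rewrite H ?h2 //; apply: lt_trans rp _; rewrite ltrDl.
Qed.

Lemma left_finite_dpow (q : rat) : left_finite (fun r => if r == q then 1 else 0).
Proof. by move=> q'; exists [:: q] => r _; have [->|] := eqVneq r q; rewrite ?inE ?eqxx. Qed.

(* The monomial d^q, d being the positive infinitesimal of the Levi-Civita field. *)
Definition dpow (q : rat) : LC := MkLC (left_finite_dpow q).

Lemma dpow_below (q : rat) : agree_below q (dpow q) lc_zero.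
Proof. by move=> r rq /=; rewrite lt_eqF. Qed.

Lemma lc_pos_dpow q : lc_pos (dpow q).
Proof. by exists q; split=> [/=|]; [rewrite eqxx ltr01 | exact: dpow_below]. Qed.

(** * Convergence and series *)

Lemma lc_lt_lead (x y : LC) p : lc_lt x y -> agree_below p x y -> x p != y p -> x p < y p.
Proof.
move=> [q [/= h1 h2]] hp hne.
case: (ltgtP q p) => [qp|pq|e].
- by move: h1; rewrite hp //; lra.
- by move: (h2 _ pq) hne => /= /eqP; rewrite subr_eq0 eq_sym => ->.
- by subst q; lra.
Qed.

Lemma lc_support_below (w : LC) q : ~ agree_below q w lc_zero ->
  exists2 p, p < q & w p != 0 /\ agree_below p w lc_zero.
Proof.
move=> H; have [r /(imply_to_and (_ < q)) [rq hr]] := not_all_ex_not _ _ H.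
have [|p [hp1 hp2]] := @lc_min_support w; first by exists r; apply/eqP.
exists p => //; apply: le_lt_trans rq; rewrite leNgt; apply/negP => rp.
by apply: hr; rewrite hp2.
Qed.

Lemma dpow_bound_below (w : LC) q :
  lc_lt (lc_opp (dpow q)) w -> lc_lt w (dpow q) -> agree_below q w lc_zero.
Proof.
move=> h1 h2; apply: NNPP => /lc_support_below [p pq [hp1 hp2]].
have dpow_p s : s <= p -> lc_opp (dpow q) s = 0 /\ dpow q s = 0.
  by move=> sp /=; rewrite lt_eqF ?oppr0 // (le_lt_trans sp pq).
have [dp1 dp2] := dpow_p p (lexx p).
have lt1 := lc_lt_lead h1 (p := p); have lt2 := lc_lt_lead h2 (p := p).
rewrite dp1 dp2 in lt1 lt2.
have : 0 < w p.
  by apply: lt1 => [s sp|]; [rewrite (proj1 (dpow_p s (ltW sp))) hp2 | rewrite eq_sym].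
have : w p < 0.
  by apply: lt2 => [s sp|//]; rewrite (proj2 (dpow_p s (ltW sp))) hp2.
lra.
Qed.

Lemma agree_below0_squeeze (x y : LC) q : lc_le lc_zero x -> lc_le x y ->
  agree_below q y lc_zero -> agree_below q x lc_zero.
Proof.
move=> [h0|e] hxy hy; last by move=> r _; rewrite -e.
apply: NNPP => /lc_support_below [p pq [hp1 hp2]].
have yp s : s <= p -> y s = 0 by move=> sp; rewrite hy // (le_lt_trans sp pq).
have : 0 < x p.
  by apply: (lc_lt_lead h0) => [s sp|]; [rewrite hp2 | rewrite eq_sym].
case: hxy => [hxy|e]; last by subst y; rewrite yp // ltxx.
have : x p < 0.
  rewrite -(yp p (lexx p)); apply: lc_lt_lead hxy _ _ => [s sp|].
    by rewrite hp2 // yp // ltW.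
  by rewrite yp.
lra.
Qed.

Lemma lc_limP (u : nat -> LC) (l : LC) :
  lc_lim u l <-> forall q, exists N, forall n, (N <= n)%N -> agree_below q (u n) l.
Proof.
split=> [H q|H a b ha hb].
- have [||N HN] := H (lc_sub l (dpow q)) (lc_add l (dpow q)).
  + by apply: lc_pos_congr (lc_pos_dpow q) => r /=; lra.
  + by apply: lc_pos_congr (lc_pos_dpow q) => r /=; lra.
  exists N => n /HN [h1 h2] r rq.
  have h1' : lc_lt (lc_opp (dpow q)) (lc_sub (u n) l) by apply: lc_lt_shift h1 => s /=; lra.
  have h2' : lc_lt (lc_sub (u n) l) (dpow q) by apply: lc_lt_shift h2 => s /=; lra.
  by have /= := dpow_bound_below h1' h2' rq; lra.
- have [q1 H1] := lc_pos_agree ha; have [q2 H2] := lc_pos_agree hb.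
  have [N1 HN1] := H q1; have [N2 HN2] := H q2.
  exists (maxn N1 N2) => n; rewrite geq_max => /andP [n1 n2].
  by split; [apply: H1 => r rq /=; rewrite HN1 | apply: H2 => r rq /=; rewrite HN2].
Qed.

Lemma lc_lim_le (u v : nat -> LC) a b N0 : lc_lim u a -> lc_lim v b ->
  (forall n, (N0 <= n)%N -> lc_le (u n) (v n)) -> lc_le a b.
Proof.
move=> /lc_limP hu /lc_limP hv H; apply/lc_leNgt => /lc_pos_agree [q Hq].
have [N1 HN1] := hu q; have [N2 HN2] := hv q.
have /lc_leNgt := H (maxn N0 (maxn N1 N2)) (leq_maxl _ _); apply; apply: Hq => r rq /=.
by rewrite HN1 ?HN2 // ?(leq_trans (leq_maxr _ _) (leq_maxr _ _))
  ?(leq_trans (leq_maxl _ _) (leq_maxr _ _)).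
Qed.

Lemma lc_lim_cst (c : LC) : lc_lim (fun _ => c) c.
Proof. by apply/lc_limP => q; exists 0%N. Qed.

Lemma lc_limD (u v : nat -> LC) a b : lc_lim u a -> lc_lim v b ->
  lc_lim (fun n => lc_add (u n) (v n)) (lc_add a b).
Proof.
move=> /lc_limP hu /lc_limP hv; apply/lc_limP => q.
have [N1 HN1] := hu q; have [N2 HN2] := hv q.
exists (maxn N1 N2) => n; rewrite geq_max => /andP [n1 n2] r rq /=.
by rewrite HN1 ?HN2.
Qed.

Lemma lc_lim_eq_eventually (u v : nat -> LC) l N0 :
  (forall n, (N0 <= n)%N -> u n = v n) -> lc_lim u l -> lc_lim v l.
Proof.
move=> E /lc_limP hu; apply/lc_limP => q; have [N HN] := hu q.
exists (maxn N0 N) => n; rewrite geq_max => /andP [n1 n2] r rq.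
by rewrite -E ?HN.
Qed.

Lemma lc_lim_squeeze0 (u v : nat -> LC) : (forall n, lc_le lc_zero (u n)) ->
  (forall n, lc_le (u n) (v n)) -> lc_lim v lc_zero -> lc_lim u lc_zero.
Proof.
move=> h0 huv /lc_limP hv; apply/lc_limP => q; have [N HN] := hv q.
by exists N => n /HN; apply: agree_below0_squeeze.
Qed.

Lemma lc_psumE (u : nat -> LC) n r : lc_psum u n r = \sum_(0 <= k < n) u k r.
Proof.
elim: n => [|n IH]; first by rewrite big_geq.
by rewrite big_nat_recr //= IH.
Qed.

Lemma lc_psumD (c d : nat -> LC) n :
  lc_psum (fun k => lc_add (c k) (d k)) n = lc_add (lc_psum c n) (lc_psum d n).
Proof. by apply: lc_ext => r; rewrite /= !lc_psumE big_split. Qed.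

Lemma lc_psum_stable (t : nat -> LC) r N : (forall n, (N <= n)%N -> t n r = 0) ->
  forall M, (N <= M)%N -> lc_psum t M r = lc_psum t N r.
Proof.
move=> H; elim=> [|M IH]; first by rewrite leqn0 => /eqP ->.
rewrite leq_eqVlt => /orP [/eqP <- //|]; rewrite ltnS => NM.
by rewrite /= IH // H // addr0.
Qed.

(* The sum is built coefficientwise: below any q the partial sums are eventually constant. *)
Lemma lc_series_of_lim0 (t : nat -> LC) : lc_lim t lc_zero -> exists s, lc_series t s.
Proof.
move=> /lc_limP H.
pose Nq q := proj1_sig (constructive_indefinite_description _ (H q)).
have HN q : forall n, (Nq q <= n)%N -> agree_below q (t n) lc_zero.
  exact: proj2_sig (constructive_indefinite_description _ (H q)).
have stable q r M : r < q -> (Nq q <= M)%N -> lc_psum t M r = lc_psum t (Nq q) r.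
  by move=> rq; apply: lc_psum_stable => n /HN; apply.
pose Cf r := lc_psum t (Nq (r + 1)) r.
have key q r : r < q -> Cf r = lc_psum t (Nq q) r.
  move=> rq; have r1 : r < r + 1 by rewrite ltrDl.
  rewrite /Cf -(stable _ _ _ r1 (leq_maxl _ (Nq q))).
  by rewrite -(stable _ _ _ rq (leq_maxr (Nq (r + 1)) _)).
have lf : left_finite Cf.
  move=> q; have [s hs] := lcP (lc_psum t (Nq q)) q.
  by exists s => r rq; rewrite (key q) //; exact: hs.
exists (MkLC lf); apply/lc_limP => q; exists (Nq q) => n hn r rq /=.
by rewrite (key q) // (stable q).
Qed.

Lemma lc_series_tail (t : nat -> LC) s : lc_series t s -> forall q, exists K,
  forall k, (K <= k)%N -> agree_below q (lc_psum t k) s /\ agree_below q (t k) lc_zero.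
Proof.
move=> /lc_limP H q; have [K HK] := H q; exists K => k Kk; split; first exact: HK.
move=> r rq; have /= := HK k.+1 (leqW Kk) r rq; rewrite HK //; lra.
Qed.

Lemma lc_psum_le (c d : nat -> LC) n : (forall k, lc_le (c k) (d k)) ->
  lc_le (lc_psum c n) (lc_psum d n).
Proof. by move=> H; elim: n => [|n IH] /=; [right | exact: lc_leD]. Qed.

Lemma lc_psum_mono (c : nat -> LC) n m : (forall k, lc_le lc_zero (c k)) -> (n <= m)%N ->
  lc_le (lc_psum c n) (lc_psum c m).
Proof.
move=> H; elim: m => [|m IH]; first by rewrite leqn0 => /eqP ->; right.
rewrite leq_eqVlt => /orP [/eqP <-|]; first by right.
rewrite ltnS => /IH /lc_le_trans; apply.
by have := lc_leD (or_intror (erefl (lc_psum c m))) (H m); apply: lc_le_shift => r /=; lra.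
Qed.

Lemma lc_psum_le_series (c : nat -> LC) s n : (forall k, lc_le lc_zero (c k)) ->
  lc_series c s -> lc_le (lc_psum c n) s.
Proof.
by move=> H hs; apply: (lc_lim_le (N0 := n) (@lc_lim_cst _) hs) => m; exact: lc_psum_mono.
Qed.

Lemma lc_term_le_series (c : nat -> LC) s k : (forall k, lc_le lc_zero (c k)) ->
  lc_series c s -> lc_le (c k) s.
Proof.
move=> H hs; apply: lc_le_trans (lc_psum_le_series k.+1 H hs).
have := lc_leD (lc_psum_mono (n := 0) H (leq0n k)) (or_intror (erefl (c k))).
by apply: lc_le_shift => r /=; lra.
Qed.

Lemma lc_series_ge0 (c : nat -> LC) s : (forall k, lc_le lc_zero (c k)) ->
  lc_series c s -> lc_le lc_zero s.
Proof. exact: lc_psum_le_series 0. Qed.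

Lemma lc_series_below0 (t : nat -> LC) s q : (forall n, agree_below q (t n) lc_zero) ->
  lc_series t s -> agree_below q s lc_zero.
Proof.
move=> H /lc_series_tail /(_ q) [K HK] r rq; rewrite -(proj1 (HK K (leqnn K)) r rq).
by rewrite lc_psumE big1 // => k _; rewrite H.
Qed.

Lemma dpow_shift_lim0 (q : rat) : lc_lim (fun n => dpow (q + n%:R)) lc_zero.
Proof.
apply/lc_limP => q'.
have bound := @archi_boundP _ `|q' - q| (normr_ge0 _).
exists (Num.Def.archi_bound `|q' - q|) => n hn r rq; apply: dpow_below.
have : (Num.Def.archi_bound `|q' - q|)%:R <= (n%:R : rat) by rewrite ler_nat.
have : q' - q <= `|q' - q| by exact: ler_norm.
lra.
Qed.

Lemma lc_series_interleave (u v : nat -> LC) a b : lc_series u a -> lc_series v b ->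
  lc_series (fun n => if odd n then v n./2 else u n./2) (lc_add a b).
Proof.
move=> /lc_limP hu /lc_limP hv; apply/lc_limP => q.
have [N1 H1] := hu q; have [N2 H2] := hv q.
have psum_il n r : lc_psum (fun k => if odd k then v k./2 else u k./2) n r =
    lc_psum u (uphalf n) r + lc_psum v n./2 r.
  elim: n => [|n IH] /=; first by rewrite addr0.
  by rewrite IH uphalf_half; case: (odd n) => /=; lra.
exists (N1 + N2).*2 => n hn r rq; rewrite psum_il /= H1 ?H2 //.
  by rewrite (leq_trans (leq_addl N1 N2)) // geq_half_double.
rewrite uphalf_half (leq_trans (leq_addr N2 N1)) // (leq_trans _ (leq_addl _ _)) //.
by rewrite geq_half_double.
Qed.

(** * Covers and outer measure *)

Lemma ilength_ge0 (I : Defs.interval) : valid_interval I -> lc_le lc_zero (ilength I).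
Proof. by move=> h; left; apply: lc_pos_congr h => q /=; lra. Qed.

Lemma cover_sums_ge0 (A : lcset) s : cover_sums A s -> lc_le lc_zero s.
Proof. by move=> [S [[v _] hs]]; apply: lc_series_ge0 hs => k; exact: ilength_ge0. Qed.

Lemma cover_sums_sub (A B : lcset) s : (forall x, A x -> B x) ->
  cover_sums B s -> cover_sums A s.
Proof. by move=> AB [S [[v [c e]] hs]]; exists S; split=> //; split=> //; split=> // x /AB /c. Qed.

Lemma cover_sums_union (A B C : lcset) s t : cover_sums A s -> cover_sums B t ->
  (forall x, C x -> A x \/ B x) -> cover_sums C (lc_add s t).
Proof.
move=> [S [[vS [cS _]] hS]] [T [[vT [cT _]] hT]] CAB.
pose W n := if odd n then T n./2 else S n./2.
have hW : lc_series (fun n => ilength (W n)) (lc_add s t).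
  have -> : (fun n => ilength (W n)) =
      (fun n => if odd n then ilength (T n./2) else ilength (S n./2)).
    by apply: functional_extensionality => n; rewrite /W; case: (odd n).
  exact: lc_series_interleave hS hT.
exists W; do !split=> //; last by exists (lc_add s t).
- by move=> n; rewrite /W; case: (odd n).
- move=> x /CAB [/cS [n hn]|/cT [n hn]].
    by exists n.*2; rewrite /W odd_double half_double.
  by exists n.*2.+1; rewrite /W /= odd_double /= uphalf_double.
Qed.

Lemma is_inf_unique (P : LC -> Prop) m m' : is_inf P m -> is_inf P m' -> m = m'.
Proof. by move=> [h1 h2] [k1 k2]; apply: lc_le_anti; [exact: k2 | exact: h2]. Qed.

Lemma Mu_eq (A : lcset) m : is_inf (cover_sums A) m -> Mu A = m.
Proof.
move=> h; apply: is_inf_unique (h).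
exact: epsilon_spec (inhabits lc_zero) (fun m => is_inf (cover_sums A) m) (ex_intro _ m h).
Qed.

Lemma Mu_is_inf (A : lcset) : outer_measurable A -> is_inf (cover_sums A) (Mu A).
Proof. by move=> [m h]; rewrite (Mu_eq h). Qed.

Lemma Mu_ge0 (A : lcset) : outer_measurable A -> lc_le lc_zero (Mu A).
Proof. by move=> /Mu_is_inf [_]; apply=> s; exact: cover_sums_ge0. Qed.

Lemma Mu_le (A B : lcset) : outer_measurable A -> outer_measurable B ->
  (forall x, A x -> B x) -> lc_le (Mu A) (Mu B).
Proof.
move=> /Mu_is_inf [a1 _] /Mu_is_inf [_ b2] AB; apply: b2 => s hs.
by apply: a1; exact: cover_sums_sub hs.
Qed.

Definition cover_approx (A : lcset) (m : LC) : Prop :=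
  forall c, lc_lt m c -> exists s, cover_sums A s /\ lc_lt s c.

Lemma is_inf_cover_approx (A : lcset) m : (forall s, cover_sums A s -> lc_le m s) ->
  cover_approx A m -> is_inf (cover_sums A) m.
Proof.
move=> low app; split=> // m' low'; apply/lc_leNgt => /app [s [hs sm']].
by move: (low' s hs) => /lc_leNgt.
Qed.

Lemma Mu_cover_approx (A : lcset) : outer_measurable A -> cover_approx A (Mu A).
Proof.
move=> /Mu_is_inf [_ h2] c mc; apply: NNPP => H.
suff /lc_leNgt : lc_le c (Mu A) by [].
by apply: h2 => s hs; apply/lc_leNgt => sc; apply: H; exists s.
Qed.

Lemma cover_approx_sub (A B : lcset) m : (forall x, A x -> B x) ->
  cover_approx B m -> cover_approx A m.
Proof. by move=> AB app c /app [s [hs sc]]; exists s; split=> //; exact: cover_sums_sub hs. Qed.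

Lemma cover_approx_le (A : lcset) m m' : lc_le m m' -> cover_approx A m -> cover_approx A m'.
Proof. by move=> mm' app c m'c; apply: app; exact: lc_le_lt_trans mm' m'c. Qed.

Lemma left_finite_half (e : LC) : left_finite (fun q => e q / 2).
Proof.
move=> q; have [s hs] := lcP e q; exists s => r rq h; apply: hs rq _.
by apply: contra h => /eqP ->; rewrite mul0r.
Qed.

Definition lc_half (e : LC) : LC := MkLC (left_finite_half e).

Lemma lc_pos_half (e : LC) : lc_pos e -> lc_pos (lc_half e).
Proof.
move=> [p [h1 h2]]; exists p; split=> /=; first by rewrite divr_gt0.
by move=> r rp; rewrite h2 // mul0r.
Qed.

Lemma cover_approx_union (A B C : lcset) a b : cover_approx A a -> cover_approx B b ->
  (forall x, C x -> A x \/ B x) -> cover_approx C (lc_add a b).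
Proof.
move=> appA appB CAB c abc; have d2 := lc_pos_half abc.
have [|s [hs sa]] := appA (lc_add a (lc_half (lc_sub c (lc_add a b)))).
  by apply: lc_pos_congr d2 => r /=; lra.
have [|t [ht tb]] := appB (lc_add b (lc_half (lc_sub c (lc_add a b)))).
  by apply: lc_pos_congr d2 => r /=; lra.
exists (lc_add s t); split; first exact: cover_sums_union hs ht CAB.
by apply: lc_lt_shift (lc_ltD sa tb) => r /=; lra.
Qed.

(** * Countable unions *)

Lemma sum_cantor_box (V : nmodType) (N K : nat) : exists J0, forall J, (J0 <= J)%N ->
  forall g : nat * nat -> V, (forall p, (N <= p.1)%N || (K <= p.2)%N -> g p = 0) ->
  \sum_(0 <= j < J) g (Cantor.of_nat j) = \sum_(0 <= n < N) \sum_(0 <= k < K) g (n, k).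
Proof.
pose box := [seq (n, k) | n <- iota 0 N, k <- iota 0 K].
have mem_box p : (p \in box) = (p.1 < N)%N && (p.2 < K)%N.
  case: p => a b; apply/allpairsP/andP => /=.
    by move=> [[x y] [/= hx hy [-> ->]]]; move: hx hy; rewrite !mem_iota.
  by move=> [ha hb]; exists (a, b); rewrite /= !mem_iota.
exists (\max_(p <- box) (Cantor.to_nat p).+1)%N => J hJ g g0.
have to_lt p : p \in box -> (Cantor.to_nat p < J)%N.
  move=> pb; apply: leq_trans hJ.
  exact: (@leq_bigmax_seq _ box predT (fun p => (Cantor.to_nat p).+1) p pb).
rewrite -(big_rmcond_in (fun j => Cantor.of_nat j \in box)); last first.
  by move=> j _; rewrite mem_box negb_and -!leqNgt => H; apply: g0.
rewrite -big_filter -(big_map Cantor.of_nat predT g) (perm_big box); last first.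
  apply: uniq_perm.
  - by rewrite map_inj_uniq ?filter_uniq ?iota_uniq //; exact: can_inj Cantor.cancel_to_of.
  - by apply: allpairs_uniq; rewrite ?iota_uniq // => -[? ?] [? ?].
  - move=> p; apply/mapP/idP => [[j] | pb]; first by rewrite mem_filter => /andP [? _] ->.
    exists (Cantor.to_nat p); last by rewrite Cantor.cancel_of_to.
    by rewrite mem_filter Cantor.cancel_of_to pb mem_iota add0n /= subn0 to_lt.
by rewrite big_allpairs /index_iota !subn0.
Qed.

Lemma ex_common_bound (P : nat -> nat -> Prop) N :
  (forall n K K', (K <= K')%N -> P n K -> P n K') ->
  (forall n, exists K, P n K) -> exists K, forall n, (n < N)%N -> P n K.
Proof.
move=> mono H; elim: N => [|N [K HK]]; first by exists 0%N.
have [KN HKN] := H N; exists (maxn K KN) => n; rewrite ltnS leq_eqVlt => /orP [/eqP ->|nN].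
  by apply: mono HKN; exact: leq_maxr.
by apply: mono (HK n nN); exact: leq_maxl.
Qed.

(* Below any exponent q only finitely many terms contribute, so the rearrangement is
   a finite one. *)
Lemma lc_series_cantor (f : nat -> nat -> LC) (c : nat -> LC) C :
  (forall n k, lc_le lc_zero (f n k)) -> (forall n, lc_series (f n) (c n)) ->
  lc_series c C -> lc_series (fun j => f (Cantor.of_nat j).1 (Cantor.of_nat j).2) C.
Proof.
move=> f0 hf hC; apply/lc_limP => q.
have [N HN] := lc_series_tail hC q.
have c0 n : lc_le lc_zero (c n) by apply: lc_series_ge0 (hf n).
have tail_row n k : (N <= n)%N -> agree_below q (f n k) lc_zero.
  move=> Nn; apply: agree_below0_squeeze (proj2 (HN n Nn)) => //.
  exact: lc_term_le_series (hf n).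
have [K HK] : exists K, forall n, (n < N)%N -> forall k, (K <= k)%N ->
    agree_below q (lc_psum (f n) k) (c n) /\ agree_below q (f n k) lc_zero.
  apply: ex_common_bound => [n K K' KK' h k hk|n]; first exact/h/(leq_trans KK').
  exact: lc_series_tail (hf n) q.
have [J0 HJ] := sum_cantor_box R N K.
exists J0 => J hJ r rq; rewrite lc_psumE /=.
rewrite (HJ J hJ (fun p => f p.1 p.2 r)) => [|[n k] /= /orP [Nn|Kk]]; last 2 first.
- exact: tail_row.
- have [nN|Nn] := ltnP n N; [exact: (proj2 (HK n nN k Kk)) | exact: tail_row].
rewrite -(proj1 (HN N (leqnn N)) r rq) lc_psumE; apply: eq_big_nat => n /andP [_ nN].
by rewrite -lc_psumE (proj1 (HK n nN K (leqnn K))).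
Qed.

Lemma cover_sums_bigcup (G : nat -> lcset) (c : nat -> LC) (B : lcset) C :
  (forall n, cover_sums (G n) (c n)) -> lc_series c C ->
  (forall x, B x -> exists n, G n x) -> cover_sums B C.
Proof.
move=> hG hC BG.
pose S n := proj1_sig (constructive_indefinite_description _ (hG n)).
have HS n : is_cover (G n) (S n) /\ lc_series (fun k => ilength (S n k)) (c n).
  exact: proj2_sig (constructive_indefinite_description _ (hG n)).
pose W j := S (Cantor.of_nat j).1 (Cantor.of_nat j).2.
have hW : lc_series (fun j => ilength (W j)) C.
  apply: (lc_series_cantor (f := fun n k => ilength (S n k))) hC => [n k|n].
    by apply: ilength_ge0; case: (HS n) => -[v _] _; exact: v.
  by case: (HS n).
exists W; split=> //; split; [|split; [|by exists C]].
- by move=> j; case: (HS (Cantor.of_nat j).1) => -[v _] _; exact: v.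
- move=> x /BG [n Gn]; have [[_ [cv _]] _] := HS n; have [k hk] := cv x Gn.
  by exists (Cantor.to_nat (n, k)); rewrite /W Cantor.cancel_of_to.
Qed.

(* The slack d^(q+n) allowed for the n-th cover sums to an element with no support below q,
   hence is negligible against c - L. *)
Lemma cover_approx_bigcup (G : nat -> lcset) (m : nat -> LC) (B : lcset) L :
  (forall n, cover_approx (G n) (m n)) -> lc_lim m lc_zero -> lc_series m L ->
  (forall x, B x -> exists n, G n x) -> cover_approx B L.
Proof.
move=> appG m0 hL BG c /lc_pos_agree [q Hq].
have [E hE] := lc_series_of_lim0 (dpow_shift_lim0 q).
have E0 : agree_below q E lc_zero.
  apply: lc_series_below0 hE => n r rq; apply: dpow_below.
  by rewrite ltr_wpDr ?ler0n.
have app n : exists s, cover_sums (G n) s /\ lc_lt s (lc_add (m n) (dpow (q + n%:R))).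
  by apply: appG; apply: lc_pos_congr (lc_pos_dpow (q + n%:R)) => r /=; lra.
pose s n := proj1_sig (constructive_indefinite_description _ (app n)).
have hs n : cover_sums (G n) (s n) /\ lc_lt (s n) (lc_add (m n) (dpow (q + n%:R))).
  exact: proj2_sig (constructive_indefinite_description _ (app n)).
have s0 : lc_lim s lc_zero.
  apply: lc_lim_squeeze0 (fun n => cover_sums_ge0 (proj1 (hs n))) (fun n => or_introl (proj2 (hs n))) _.
  have := lc_limD m0 (dpow_shift_lim0 q).
  by rewrite (_ : lc_add lc_zero lc_zero = lc_zero) //; apply: lc_ext => r /=; rewrite addr0.
have [S hS] := lc_series_of_lim0 s0.
exists S; split; first exact: cover_sums_bigcup (fun n => proj1 (hs n)) hS BG.
apply: (@lc_le_lt_trans _ (lc_add L E)).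
  apply: (lc_lim_le (N0 := 0) hS (lc_limD hL hE)) => n _; rewrite -lc_psumD.
  by apply: lc_psum_le => k; left; exact: (proj2 (hs k)).
by apply: (Hq (lc_sub c (lc_add L E))) => r rq /=; rewrite E0 //= addr0.
Qed.

(** * Splitting X along the A_n *)

Fixpoint outside (A : nat -> lcset) (X : lcset) (N : nat) : lcset :=
  if N is N'.+1 then Defs.setI (Defs.setC (A N')) (outside A X N') else X.

Definition piece (A : nat -> lcset) (X : lcset) (n : nat) : lcset :=
  Defs.setI (A n) (outside A X n).

Definition union_upto (A : nat -> lcset) (X : lcset) (N : nat) : lcset :=
  fun x => X x /\ exists n, (n < N)%N /\ A n x.

Lemma outsideP A X N x : outside A X N x <-> X x /\ forall n, (n < N)%N -> ~ A n x.
Proof.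
elim: N => [|N IH] /=; first by split=> [|[]//]; split=> // n; rewrite ltn0.
rewrite /Defs.setI /Defs.setC IH; split=> [[nA [Xx h]]|[Xx h]].
  by split=> // n; rewrite ltnS leq_eqVlt => /orP [/eqP ->|/h].
by split; [apply: h | split=> // n nN; apply/h/ltnW].
Qed.

Lemma union_upto_or_outside A X N x : X x -> union_upto A X N x \/ outside A X N x.
Proof.
move=> Xx; have [h|h] := classic (exists n, (n < N)%N /\ A n x); first by left.
by right; apply/outsideP; split=> // n nN An; apply: h; exists n.
Qed.

Lemma union_uptoS A X N x : union_upto A X N.+1 x -> union_upto A X N x \/ piece A X N x.
Proof.
move=> [Xx [n [nN An]]]; have [|h] := union_upto_or_outside A N Xx; first by left.
right; split=> //; move: nN; rewrite ltnS leq_eqVlt => /orP [/eqP <- //|nN].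
by have [_ /(_ n nN)] := proj1 (outsideP A X N x) h.
Qed.

Lemma union_upto_pieces A X N x : union_upto A X N x -> exists n, piece A X n x.
Proof.
elim: N => [[_ [n []]]|N IH /union_uptoS [/IH //|h]]; first by rewrite ltn0.
by exists N.
Qed.

Section Pieces.
Variables (A : nat -> lcset) (X : lcset).
Hypothesis measA : forall n, L_measurable (A n).
Hypothesis omX : outer_measurable X.

Lemma outside_om N : outer_measurable (outside A X N).
Proof. by elim: N => [|N IH] //=; have [_ /(_ _ IH) [_ []]] := measA N. Qed.

Lemma piece_om n : outer_measurable (piece A X n).
Proof. by have [_ /(_ _ (outside_om n)) []] := measA n. Qed.

Lemma Mu_split_outside N :
  Mu X = lc_add (lc_psum (fun n => Mu (piece A X n)) N) (Mu (outside A X N)).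
Proof.
apply: lc_ext => r; elim: N => [|N IH] /=; first by rewrite add0r.
have [_ /(_ _ (outside_om N)) [_ [_ E]]] := measA N.
by rewrite IH E /=; lra.
Qed.

Lemma psum_pieces_le N s : cover_sums (union_upto A X N) s ->
  lc_le (lc_psum (fun n => Mu (piece A X n)) N) s.
Proof.
move=> hs.
suff : lc_le (lc_sub (Mu X) s) (Mu (outside A X N)).
  by apply: lc_le_shift => r /=; rewrite (Mu_split_outside N) /=; lra.
have [_ +] := Mu_is_inf (outside_om N); apply=> t ht.
have [+ _] := Mu_is_inf omX => /(_ _ (cover_sums_union hs ht (@union_upto_or_outside A X N))).
by apply: lc_le_shift => r /=; lra.
Qed.

Lemma cover_approx_union_upto N :
  cover_approx (union_upto A X N.+1) (lc_psum (fun n => Mu (piece A X n)) N.+1).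
Proof.
elim: N => [|N IH].
  apply: (@cover_approx_le _ (Mu (piece A X 0))).
    by apply: lc_le_shift (or_intror (erefl (Mu (piece A X 0)))) => r /=; lra.
  apply: cover_approx_sub (Mu_cover_approx (piece_om 0)) => x /union_uptoS [[_ [n []]]|//].
  by rewrite ltn0.
exact: cover_approx_union IH (Mu_cover_approx (piece_om N.+1)) (@union_uptoS A X N.+1).
Qed.

Lemma Mu_union_upto N :
  Mu (union_upto A X N.+1) = lc_psum (fun n => Mu (piece A X n)) N.+1.
Proof.
apply/Mu_eq/is_inf_cover_approx; last exact: cover_approx_union_upto.
exact: psum_pieces_le.
Qed.

Lemma Mu_pieces_lim0 : lc_lim (fun n => Mmeas (A n)) lc_zero ->
  lc_lim (fun n => Mu (piece A X n)) lc_zero.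
Proof.
apply: lc_lim_squeeze0 => [n|n]; first exact: Mu_ge0 (piece_om n).
by apply: Mu_le (piece_om n) (proj1 (measA n)) _ => x [].
Qed.

Lemma is_inf_bigunion L : lc_lim (fun n => Mu (piece A X n)) lc_zero ->
  lc_series (fun n => Mu (piece A X n)) L ->
  is_inf (cover_sums (fun x => X x /\ exists n, A n x)) L.
Proof.
move=> m0 hL; apply: is_inf_cover_approx => [s hs|].
  apply: (lc_lim_le (N0 := 0) hL (@lc_lim_cst _)) => N _; apply: psum_pieces_le.
  by apply: cover_sums_sub hs => x [Xx [n [_ An]]]; split=> //; exists n.
apply: cover_approx_bigcup (fun n => Mu_cover_approx (piece_om n)) m0 hL _.
by move=> x [Xx [n An]]; apply: (@union_upto_pieces A X n.+1); split=> //; exists n.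
Qed.

End Pieces.

Theorem lemma4p1 (A : nat -> lcset) (X : lcset) :
  (forall n, L_measurable (A n)) ->
  lc_lim (fun n => Mmeas (A n)) lc_zero ->
  outer_measurable X ->
  outer_measurable (fun x => X x /\ exists n, A n x) /\
  (exists L, lc_lim (fun N => Mu (fun x => X x /\ exists n, (n < N)%N /\ A n x)) L) /\
  lc_lim (fun N => Mu (fun x => X x /\ exists n, (n < N)%N /\ A n x))
         (Mu (fun x => X x /\ exists n, A n x)).
Proof.
move=> measA limA omX.
have m0 := Mu_pieces_lim0 measA omX limA.
have [L hL] := lc_series_of_lim0 m0.
have hinf := is_inf_bigunion measA omX m0 hL.
have hlim : lc_lim (fun N => Mu (union_upto A X N)) L.
  by apply: (lc_lim_eq_eventually (N0 := 1)) hL => -[|N] // _; rewrite Mu_union_upto.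
by rewrite (Mu_eq hinf); split; [exists L | split; [exists L|]].
Qed.
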